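(* Assume $q>2$. For every integer $k\ge1$, in $K_\infty$: $$\zeta_C(q^k)\,\zeta_C(q^k-1)=\zeta_C(2q^k-1)+\zeta_C(q^k-1,q^k).$$
   Context: $A=\mathbb{F}_q[\theta]$, $A^+$ the monic polynomials, $K_\infty=\mathbb{F}_q((1/\theta))$. $\zeta_C(n)=\sum_{a\in A^+}a^{-n}$ and $\zeta_C(n_1,n_2)=\sum_{a_1,a_2\in A^+,\ \deg a_1>\deg a_2}a_1^{-n_1}a_2^{-n_2}$, for integers $n,n_1,n_2\ge1$. *)

(* K_oo = F_q((1/theta)).  All quantities in the theorem lie in
   the valuation ring F_q[[1/theta]]; we model an element of F_q[[1/theta]] by
   its coefficient sequence  f : nat -> F,  f k = coefficient of theta^(-k).
   Equality in K_oo of two such elements is equality of coefficient sequences. *)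
From HB Require Import structures.
From mathcomp Require Import all_boot all_order all_algebra all_field.
Set Implicit Arguments. Unset Strict Implicit. Unset Printing Implicit Defensive.
Import GRing.Theory.
Local Open Scope ring_scope.

Section PS.
Variable F : finFieldType.

Definition ps := nat -> F.

Definition ps_one : ps := fun k => if k == 0%N then 1 else 0.
Definition ps_add (f g : ps) : ps := fun k => f k + g k.
Definition ps_mul (f g : ps) : ps :=
  fun k => \sum_(i < k.+1) f i * g (k - i)%N.
Definition ps_exp (n : nat) (f : ps) : ps := iter n (ps_mul f) ps_one.
Definition ps_shift (d : nat) (f : ps) : ps :=
  fun k => if (d <= k)%N then f (k - d)%N else 0.

(* inverse of 1 + w for a polynomial w in t with w(0) = 0:
   (1+w)^(-1) = sum_m (-w)^m; the coefficient of t^k only involves m <= k. *)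
Definition ps_inv1 (w : {poly F}) : ps :=
  fun k => (\sum_(m < k.+1) (- w) ^+ m)`_k.

(* A monic polynomial of degree d in A = F[theta] is encoded by its lower
   coefficients c : {ffun 'I_d -> F}:
     a = theta^d + sum_(i<d) c i * theta^i
       = theta^d * (1 + sum_(i<d) c i * t^(d-i)),   t = 1/theta. *)
Definition monic_tail (d : nat) (c : {ffun 'I_d -> F}) : {poly F} :=
  \sum_(i < d) c i *: 'X^(d - i).

Definition inv_monic (d : nat) (c : {ffun 'I_d -> F}) : ps :=
  ps_shift d (ps_inv1 (monic_tail c)).

Definition inv_monic_pow (d : nat) (c : {ffun 'I_d -> F}) (n : nat) : ps :=
  ps_exp n (inv_monic c).

(* zeta_C(n) = sum_{a in A+} a^(-n), summed degree by degree; for n >= 1 the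
   monic a of degree d contribute only to coefficients of index >= d*n >= d,
   so coefficient k of the (convergent) series is the finite sum over d <= k. *)
Definition zetaC (n : nat) : ps :=
  fun k => \sum_(d < k.+1) \sum_(c : {ffun 'I_d -> F}) inv_monic_pow c n k.

(* zeta_C(n1,n2) = sum_{deg a1 > deg a2} a1^(-n1) a2^(-n2); for n1 >= 1 the
   terms with deg a1 = d1 have valuation >= d1, so only d1 <= k matter. *)
Definition zetaC2 (n1 n2 : nat) : ps :=
  fun k => \sum_(d1 < k.+1) \sum_(d2 < d1)
             \sum_(c1 : {ffun 'I_d1 -> F}) \sum_(c2 : {ffun 'I_d2 -> F})
               ps_mul (inv_monic_pow c1 n1) (inv_monic_pow c2 n2) k.

End PS.

(** Write n = q^k and m = n - 1, so that x |-> x^n is additive in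
    characteristic p, g^n = g on F, and q = 0 in F.  Truncating modulo t^N
    (t = 1/theta) turns everything into polynomials.  Splitting
    zeta(n) zeta(m) according to the degrees d, e of the two monic
    polynomials, the terms with d < e form zeta(m, n), so it suffices that
      S_d(n) S_d(m) + S_d(n) sum_(e<d) S_e(m) = S_d(n + m)
    for the power sums S_d(s) = sum_(a monic, deg a = d) a^-s.  The diagonal
    of S_d(n) S_d(m) is S_d(n + m).  Off the diagonal write a - b = g h with
    g in F^x and h monic of degree e < d; then
      a^-n b^-m = (g h)^-n (b^-m - a^-m) + h^-m a^-n,
    the first term vanishes when summed over a with a - b fixed, and the sum
    over g in F^x of the second one is (q - 1) h^-m S_d(n) = - h^-m S_d(n). *)

From HB Require Import structures.
From mathcomp Require Import all_boot all_order all_algebra all_field.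
From mathcomp Require Import ring zify.
From Stdlib Require Import Setoid Morphisms FunctionalExtensionality.
Set Implicit Arguments. Unset Strict Implicit. Unset Printing Implicit Defensive.
Import GRing.Theory.
Local Open Scope ring_scope.

Definition eqmodX (R : nzRingType) (N : nat) (p q : {poly R}) :=
  forall i, (i < N)%N -> p`_i = q`_i.

Notation "p = q %[modX N ]" := (eqmodX N p q) : ring_scope.

Section CongruenceModX.
Variables (R : nzRingType) (N : nat).

Lemma eqmodX_refl : Reflexive (@eqmodX R N).
Proof. by move=> p i. Qed.

Lemma eqmodX_sym : Symmetric (@eqmodX R N).
Proof. by move=> p q pq i /pq. Qed.

Lemma eqmodX_trans : Transitive (@eqmodX R N).
Proof. by move=> p q r pq qr i iN; rewrite pq ?qr. Qed.

End CongruenceModX.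

Add Parametric Relation (R : nzRingType) (N : nat) : {poly R} (@eqmodX R N)
  reflexivity proved by (@eqmodX_refl R N)
  symmetry proved by (@eqmodX_sym R N)
  transitivity proved by (@eqmodX_trans R N) as eqmodX_rel.

Add Parametric Morphism (R : nzRingType) (N : nat) : (@GRing.add {poly R})
  with signature eqmodX N ==> eqmodX N ==> eqmodX N as eqmodX_add.
Proof. by move=> p p' pp' q q' qq' i iN; rewrite !coefD pp' ?qq'. Qed.

Add Parametric Morphism (R : nzRingType) (N : nat) : (@GRing.opp {poly R})
  with signature eqmodX N ==> eqmodX N as eqmodX_opp.
Proof. by move=> p p' pp' i iN; rewrite !coefN pp'. Qed.

Add Parametric Morphism (R : nzRingType) (N : nat) : (@GRing.mul {poly R})
  with signature eqmodX N ==> eqmodX N ==> eqmodX N as eqmodX_mul.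
Proof.
move=> p p' pp' q q' qq' i iN; rewrite !coefM; apply: eq_bigr => j _.
have jN : (j < N)%N := leq_ltn_trans (ltnSE (ltn_ord j)) iN.
by rewrite pp' ?qq' // (leq_ltn_trans (leq_subr _ _) iN).
Qed.

Add Parametric Morphism (R : nzRingType) (N : nat) : (@GRing.exp {poly R})
  with signature eqmodX N ==> eq ==> eqmodX N as eqmodX_exp.
Proof. by move=> p p' pp'; elim=> [|n IHn]; rewrite ?exprS ?IHn ?pp'. Qed.

Section CongruenceModXTheory.
Variables (R : nzRingType) (N : nat).
Implicit Types p q u w : {poly R}.

Lemma eqmodX_sum (I : finType) (P : pred I) (f g : I -> {poly R}) :
  (forall i, P i -> f i = g i %[modX N]) ->
  \sum_(i | P i) f i = \sum_(i | P i) g i %[modX N].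
Proof. by move=> fg j jN; rewrite !coef_sum; apply: eq_bigr => i /fg->. Qed.

Lemma eqmodX_mulIr p q w u :
  w * u = 1 %[modX N] -> p * w = q * w %[modX N] -> p = q %[modX N].
Proof.
move=> wu pq; rewrite -[p]mulr1 -[q]mulr1 -wu !mulrA pq; reflexivity.
Qed.

End CongruenceModXTheory.

Section Truncation.
Variable F : finFieldType.
Implicit Types (f g : ps F) (N : nat) (p : {poly F}).

Definition trunc_ps N f : {poly F} := \poly_(i < N) f i.

Lemma coef_trunc_ps N f i : (trunc_ps N f)`_i = if (i < N)%N then f i else 0.
Proof. exact: coef_poly. Qed.

Lemma trunc_ps_coef N f p i :
  trunc_ps N f = p %[modX N] -> (i < N)%N -> f i = p`_i.
Proof. by move=> fp iN; rewrite -fp // coef_trunc_ps iN. Qed.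

Lemma trunc_ps_mul N f g :
  trunc_ps N (ps_mul f g) = trunc_ps N f * trunc_ps N g %[modX N].
Proof.
move=> i iN; rewrite coef_trunc_ps iN coefM; apply: eq_bigr => j _.
rewrite !coef_trunc_ps (leq_ltn_trans (leq_subr _ _) iN).
by rewrite (leq_ltn_trans (ltnSE (ltn_ord j)) iN).
Qed.

Lemma trunc_ps_one N : trunc_ps N (ps_one F) = 1 %[modX N].
Proof. by move=> i iN; rewrite coef_trunc_ps iN coef1 /ps_one; case: (i == 0)%N. Qed.

Lemma trunc_ps_exp N n f : trunc_ps N (ps_exp n f) = trunc_ps N f ^+ n %[modX N].
Proof.
elim: n => [|n IHn]; first exact: trunc_ps_one.
by rewrite /ps_exp iterS -/(ps_exp n f) exprS trunc_ps_mul IHn; reflexivity.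
Qed.

End Truncation.

Section MonicInverse.
Variable F : finFieldType.
Implicit Types (N d n : nat).

(* With t = 1/theta the monic a of degree d encoded by c is t^-d * rev_monic c,
   so modulo t^N its inverse is inv_monic_poly N c. *)
Definition rev_monic d (c : {ffun 'I_d -> F}) : {poly F} := 1 + monic_tail c.

Definition rev_monic_inv N d (c : {ffun 'I_d -> F}) : {poly F} :=
  \sum_(j < N) (- monic_tail c) ^+ j.

Definition inv_monic_poly N d (c : {ffun 'I_d -> F}) : {poly F} :=
  'X^d * rev_monic_inv N c.

Lemma monic_tailB d (c c' : {ffun 'I_d -> F}) :
  monic_tail (c - c') = monic_tail c - monic_tail c'.
Proof.
by rewrite /monic_tail -sumrB; apply: eq_bigr => i _; rewrite !ffunE scalerBl.
Qed.

Lemma coef_monic_tail_exp d (c : {ffun 'I_d -> F}) j i :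
  (i < j)%N -> ((- monic_tail c) ^+ j)`_i = 0.
Proof.
have -> : monic_tail c = 'X * \sum_(l < d) c l *: 'X^((d - l).-1) :> {poly F}.
  rewrite /monic_tail mulr_sumr; apply: eq_bigr => l _.
  by rewrite -scalerAr -exprS prednK // subn_gt0.
by move=> ij; rewrite -mulrN exprMn coefXnM ij.
Qed.

Lemma rev_monicK N d (c : {ffun 'I_d -> F}) :
  rev_monic c * rev_monic_inv N c = 1 %[modX N].
Proof.
have -> : rev_monic c * rev_monic_inv N c = 1 - (- monic_tail c) ^+ N.
  by rewrite /rev_monic /rev_monic_inv -[in RHS]opprB subrX1 -mulNr opprB opprK.
by move=> i iN; rewrite coefB coef_monic_tail_exp // subr0.
Qed.

Lemma trunc_inv_monic N d (c : {ffun 'I_d -> F}) :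
  trunc_ps N (inv_monic c) = inv_monic_poly N c %[modX N].
Proof.
move=> i iN; rewrite coef_trunc_ps iN /inv_monic /ps_shift coefXnM.
case: ltnP => // di; rewrite /ps_inv1 /rev_monic_inv !coef_sum.
have idN : (i - d < N)%N by rewrite (leq_ltn_trans (leq_subr _ _) iN).
rewrite (big_ord_widen N (fun j => ((- monic_tail c) ^+ j)`_(i - d))) //.
rewrite [RHS](bigID (fun j : 'I_N => (j < (i - d).+1)%N)) /=.
by rewrite [X in _ = _ + X]big1 ?addr0 // => j; rewrite -leqNgt => /coef_monic_tail_exp.
Qed.

Lemma trunc_inv_monic_pow N d (c : {ffun 'I_d -> F}) n :
  trunc_ps N (inv_monic_pow c n) = inv_monic_poly N c ^+ n %[modX N].
Proof. by rewrite /inv_monic_pow trunc_ps_exp trunc_inv_monic; reflexivity. Qed.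

Lemma coef_inv_monic_poly_exp N d (c : {ffun 'I_d -> F}) n i :
  (0 < n)%N -> (i < d)%N -> (inv_monic_poly N c ^+ n)`_i = 0.
Proof.
by move=> n_gt0 id; rewrite exprMn -exprM coefXnM (leq_trans id) // leq_pmulr.
Qed.

End MonicInverse.

Section PowerSums.
Variable F : finFieldType.
Implicit Types (N d s : nat).

Definition power_sum N d s : {poly F} :=
  \sum_(c : {ffun 'I_d -> F}) inv_monic_poly N c ^+ s.

Lemma coef_zetaC N s i : (0 < s)%N -> (i < N)%N ->
  zetaC F s i = (\sum_(d < N) power_sum N d s)`_i.
Proof.
move=> s_gt0 iN; rewrite /zetaC coef_sum.
rewrite (big_ord_widen N (fun d => \sum_(c : {ffun 'I_d -> F}) inv_monic_pow c s i)) //.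
rewrite [RHS](bigID (fun d : 'I_N => (d < i.+1)%N)) /= [X in _ = _ + X]big1 ?addr0.
  apply: eq_bigr => d _; rewrite coef_sum; apply: eq_bigr => c _.
  by apply: trunc_ps_coef iN; apply: trunc_inv_monic_pow.
move=> d; rewrite -leqNgt => id; rewrite coef_sum big1 // => c _.
exact: coef_inv_monic_poly_exp.
Qed.

Lemma trunc_zetaC N s : (0 < s)%N ->
  trunc_ps N (zetaC F s) = \sum_(d < N) power_sum N d s %[modX N].
Proof. by move=> s_gt0 i iN; rewrite coef_trunc_ps iN (coef_zetaC s_gt0 iN). Qed.

Lemma coef_zetaC2 s1 s2 j :
  zetaC2 F s1 s2 j =
  (\sum_(d1 < j.+1) \sum_(d2 < d1) power_sum j.+1 d1 s1 * power_sum j.+1 d2 s2)`_j.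
Proof.
rewrite /zetaC2 coef_sum; apply: eq_bigr => d1 _; rewrite coef_sum.
apply: eq_bigr => d2 _; rewrite mulr_suml coef_sum; apply: eq_bigr => c1 _.
rewrite mulr_sumr coef_sum; apply: eq_bigr => c2 _.
apply: trunc_ps_coef (ltnSn j).
by rewrite trunc_ps_mul !trunc_inv_monic_pow; reflexivity.
Qed.

End PowerSums.

Section MonicDifferences.
Variable F : finFieldType.
Implicit Types (d e : nat) (g : F).

Definition nth_ffun e (h : {ffun 'I_e -> F}) (i : nat) : F :=
  if insub i is Some j then h j else 0.

Lemma nth_ffun_ord e (h : {ffun 'I_e -> F}) (j : 'I_e) : nth_ffun h j = h j.
Proof. by rewrite /nth_ffun valK. Qed.

(* The lower d coefficients of g * (theta^e + h); a difference of two distinct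
   monic polynomials of degree d is uniquely of this form with g != 0, e < d. *)
Definition scaled_monic d e g (h : {ffun 'I_e -> F}) : {ffun 'I_d -> F} :=
  [ffun i : 'I_d => if (i < e)%N then g * nth_ffun h i
                    else if i == e :> nat then g else 0].

Definition top_index d (c : {ffun 'I_d -> F}) : nat :=
  \max_(i < d | c i != 0) i.

Definition monic_split d (c : {ffun 'I_d -> F}) e : F * {ffun 'I_e -> F} :=
  (nth_ffun c e, [ffun j : 'I_e => nth_ffun c j / nth_ffun c e]).

Lemma scaled_monic0 d e (h : {ffun 'I_e -> F}) : scaled_monic d 0 h = 0.
Proof. by apply/ffunP => i; rewrite !ffunE mul0r; case: ifP => // _; case: ifP. Qed.

Lemma scaled_monic_top d e g (h : {ffun 'I_e -> F}) (i : 'I_d) :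
  i = e :> nat -> scaled_monic d g h i = g.
Proof. by move=> ie; rewrite ffunE ie ltnn eqxx. Qed.

Lemma scaled_monic_above d e g (h : {ffun 'I_e -> F}) (i : 'I_d) :
  (e < i)%N -> scaled_monic d g h i = 0.
Proof. by move=> ei; rewrite ffunE ltnNge (ltnW ei) gtn_eqF. Qed.

Lemma scaled_monic_eq0 d (e : 'I_d) g (h : {ffun 'I_e -> F}) :
  (scaled_monic d g h == 0) = (g == 0).
Proof.
apply/eqP/eqP => [/ffunP /(_ e) | ->]; last exact: scaled_monic0.
by rewrite scaled_monic_top // ffunE.
Qed.

Lemma top_index_max d (c : {ffun 'I_d -> F}) (i : 'I_d) :
  c i != 0 -> (i <= top_index c)%N.
Proof. exact: (leq_bigmax_cond i). Qed.

Lemma top_index_attained d (c : {ffun 'I_d -> F}) :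
  c != 0 -> exists2 i : 'I_d, c i != 0 & top_index c = i.
Proof.
move=> c_neq0; have [i0 ci0] : exists i, c i != 0.
  by apply/existsP; apply: contraR c_neq0 => /existsPn c0; apply/eqP/ffunP => i;
     rewrite ffunE; apply/eqP/negPn/c0.
have [i ci top_i] := @eq_bigmax_cond _ [pred i | c i != 0] (@nat_of_ord d)
  (ltac:(by apply/card_gt0P; exists i0)).
by exists i.
Qed.

Lemma top_index_scaled_monic d (e : 'I_d) g (h : {ffun 'I_e -> F}) :
  g != 0 -> top_index (scaled_monic d g h) = e.
Proof.
move=> g_neq0; apply/eqP; rewrite eqn_leq; apply/andP; split.
  apply/bigmax_leqP => i; apply: contraR; rewrite -ltnNge => ei.
  by rewrite scaled_monic_above.
by apply: top_index_max; rewrite scaled_monic_top.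
Qed.

Lemma scaled_monicK d (e : 'I_d) g (h : {ffun 'I_e -> F}) :
  g != 0 -> monic_split (scaled_monic d g h) e = (g, h).
Proof.
move=> g_neq0; rewrite /monic_split nth_ffun_ord scaled_monic_top //.
congr pair; apply/ffunP => j; rewrite ffunE.
have jd : (j < d)%N := ltn_trans (ltn_ord j) (ltn_ord e).
rewrite -[j : nat]/(nat_of_ord (Ordinal jd)) nth_ffun_ord ffunE /= ltn_ord.
by rewrite nth_ffun_ord mulrC mulKf.
Qed.

Lemma monic_splitK d (c : {ffun 'I_d -> F}) (e : 'I_d) :
  top_index c = e -> c e != 0 ->
  scaled_monic d (monic_split c e).1 (monic_split c e).2 = c.
Proof.
move=> top_e ce_neq0; apply/ffunP => i; rewrite ffunE /= nth_ffun_ord.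
case: ltnP => [ie | ei].
  rewrite -[i : nat]/(nat_of_ord (Ordinal ie)) nth_ffun_ord ffunE /=.
  by rewrite -[i : nat]/(nat_of_ord i) nth_ffun_ord mulrC divfK.
case: eqP => [ie | ie]; first by congr (c _); apply: val_inj.
apply/esym/eqP/negbNE/negP => ci; apply: ie; apply/eqP.
by rewrite eqn_leq ei andbT -top_e top_index_max.
Qed.

Lemma sum_nonzero_ffun (V : nmodType) d (G : {ffun 'I_d -> F} -> V) :
  \sum_(c : {ffun 'I_d -> F} | c != 0) G c =
  \sum_(e < d) \sum_(g : F | g != 0) \sum_(h : {ffun 'I_e -> F}) G (scaled_monic d g h).
Proof.
case: d G => [|d] G.
  by rewrite big_ord0 big1 // => c; case/eqP; apply/ffunP => -[].
rewrite (partition_big (fun c => inord (top_index c) : 'I_d.+1) xpredT) //=.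
apply: eq_bigr => e _; rewrite pair_big /=.
rewrite (reindex_onto (fun p : F * {ffun 'I_e -> F} => scaled_monic d.+1 p.1 p.2)
                      (fun c => monic_split c e)) /=.
  apply: eq_bigl => -[g h] /=; rewrite andbT scaled_monic_eq0.
  have [//|g_neq0] := eqVneq g 0.
  by rewrite top_index_scaled_monic // inord_val scaled_monicK // !eqxx.
move=> c /andP[c_neq0 /eqP top_e].
have [i ci top_i] := top_index_attained c_neq0.
have ie : i = e by rewrite -top_e top_i inord_val.
by apply: monic_splitK; rewrite -ie.
Qed.

Lemma monic_tail_scaled_monic d e g (h : {ffun 'I_e -> F}) : (e < d)%N ->
  monic_tail (scaled_monic d g h) = g%:P * 'X^(d - e) * rev_monic h.
Proof.
move=> ed.
pose E i := if (i < e)%N then g * nth_ffun h i else if i == e then g else 0.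
rewrite /monic_tail (eq_bigr (fun i : 'I_d => E i *: 'X^(d - i))); last first.
  by move=> i _; rewrite ffunE.
rewrite -(big_mkord xpredT (fun i => E i *: 'X^(d - i))).
rewrite (@big_cat_nat _ _ _ e) //=; last exact: ltnW.
rewrite [X in _ + X]big_ltn //.
rewrite [X in _ + (_ + X)]big1_seq ?addr0; last first.
  move=> i /andP[_]; rewrite mem_index_iota => /andP[ei _].
  by rewrite /E ltnNge (ltnW ei) /= gtn_eqF // scale0r.
rewrite /E ltnn eqxx big_mkord /rev_monic mulrDr mulr1 mulr_sumr addrC.
congr (_ + _); first by rewrite mul_polyC.
apply: eq_bigr => i _.
rewrite ltn_ord nth_ffun_ord -scalerAr -mulrA -exprD mul_polyC scalerA mulrC.
by rewrite (_ : d - e + (e - i) = d - i)%N //; have := ltn_ord i; lia.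
Qed.

Lemma rev_monic_sub_scaled d e g (h : {ffun 'I_e -> F}) (c : {ffun 'I_d -> F}) :
  (e < d)%N ->
  rev_monic c - rev_monic (c - scaled_monic d g h) = g%:P * 'X^(d - e) * rev_monic h.
Proof.
move=> ed; rewrite /rev_monic monic_tailB monic_tail_scaled_monic //.
by rewrite opprD addrACA subrr add0r opprB addrC subrK.
Qed.
End MonicDifferences.

Section FiniteFieldCharacteristic.
Variable F : finFieldType.

Lemma card_finField_eq0 : #|F|%:R = 0 :> F.
Proof.
have [p _ pc] := finPcharP F.
have := finNzRing_gt1 F; rewrite (card_pprimeChar pc) natrX (pcharf0 pc).
by case: (logn _ _) => [|n] //= _; rewrite expr0n.
Qed.

Lemma mulrn_card_finField (V : lmodType F) (v : V) : v *+ #|F| = 0.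
Proof. by rewrite -scaler_nat card_finField_eq0 scale0r. Qed.

Lemma exprB_card_finField_pow k (u v : {poly F}) :
  (u - v) ^+ (#|F| ^ k)%N = u ^+ (#|F| ^ k)%N - v ^+ (#|F| ^ k)%N.
Proof.
have [p p_pr pc] := finPcharP F.
have pnat_n : [pchar {poly F}].-nat (#|F| ^ k)%N.
  by rewrite (eq_pnat _ (pchar_poly F)) (card_pprimeChar pc) !pnatX pnatE ?pc.
by rewrite exprDn_pchar // exprNn_pchar.
Qed.

Lemma expf_card_pow k (g : F) : g ^+ (#|F| ^ k)%N = g.
Proof. by elim: k => [|k IHk]; rewrite ?expr1 // expnS exprM expf_card IHk. Qed.

End FiniteFieldCharacteristic.

Lemma sumr_nonzero_const (T : finType) (x0 : T) (V : zmodType) (v : V) :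
  v *+ #|T| = 0 -> \sum_(x | x != x0) v = - v.
Proof.
move=> vT; apply/eqP; rewrite (sumr_const (predC1 x0)) cardC1 -addr_eq0 -mulrSr.
by rewrite prednK ?vT //; apply/card_gt0P; exists x0.
Qed.

Lemma sum_square_split (V : nmodType) N (f : nat -> nat -> V) :
  \sum_(d < N) \sum_(e < N) f d e =
  \sum_(d < N) f d d + \sum_(d < N) \sum_(e < d) f d e
  + \sum_(d < N) \sum_(e < d) f e d.
Proof.
elim: N => [|N IHN]; first by rewrite !big_ord0 !addr0.
rewrite big_ord_recr /=; under eq_bigr do rewrite big_ord_recr /=.
rewrite big_split /= IHN !big_ord_recr /=.
rewrite -!addrA; congr (_ + _); rewrite !addrA [f N N + _]addrC -!addrA; congr (_ + _).
by rewrite [RHS]addrC (addrC (\sum_(i < N) f N i) (_ + _)) -addrA addrA.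
Qed.

Section FrobeniusPower.
Variables (F : finFieldType) (m : nat).
Hypothesis exprB_frob : forall u v : {poly F}, (u - v) ^+ m.+1 = u ^+ m.+1 - v ^+ m.+1.
Hypothesis expf_frob : forall g : F, g ^+ m.+1 = g.

Lemma inv_pair_split N g (s t A B H uA uB uH : {poly F}) :
  g != 0 -> A - B = g%:P * s * H ->
  A * uA = 1 %[modX N] -> B * uB = 1 %[modX N] -> H * uH = 1 %[modX N] ->
  (s * t * uA) ^+ m.+1 * (s * t * uB) ^+ m
  = (g^-1%:P * (t * uH)) ^+ m.+1 * ((s * t * uB) ^+ m - (s * t * uA) ^+ m)
    + (t * uH) ^+ m * (s * t * uA) ^+ m.+1 %[modX N].
Proof.
move=> g_neq0 AB AuA BuB HuH; set G := g^-1%:P.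
have GX : G ^+ m.+1 = G by rewrite -polyC_exp exprVn expf_frob.
have sH : s * H = G * (A - B).
  by rewrite AB !mulrA -polyCM mulVf // polyC1 mul1r.
have key : t ^+ m.+1 * (s * t) ^+ m * (s * H) ^+ m.+1
    = G ^+ m.+1 * t ^+ m.+1 * (s * t) ^+ m * (A ^+ m.+1 - A * B ^+ m)
      + t ^+ m.+1 * (s * t) ^+ m * (s * H) * B ^+ m.
  rewrite !sH [(G * _) ^+ _]exprMn GX exprB_frob.
  by rewrite !exprS; ring.
(* Clearing denominators, this is a^n - b^n = (a - b)^n = (g h)^n. *)
apply (@eqmodX_mulIr _ _ _ _ (A ^+ m.+1 * B ^+ m * H ^+ m.+1)
                               (uA ^+ m.+1 * uB ^+ m * uH ^+ m.+1)).
  have -> : A ^+ m.+1 * B ^+ m * H ^+ m.+1 * (uA ^+ m.+1 * uB ^+ m * uH ^+ m.+1)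
          = (A * uA) ^+ m.+1 * (B * uB) ^+ m * (H * uH) ^+ m.+1.
    by rewrite !exprMn; ring.
  by rewrite AuA BuB HuH !expr1n !mulr1; reflexivity.
have -> : (s * t * uA) ^+ m.+1 * (s * t * uB) ^+ m * (A ^+ m.+1 * B ^+ m * H ^+ m.+1)
        = t ^+ m.+1 * (s * t) ^+ m * (s * H) ^+ m.+1
          * ((A * uA) ^+ m.+1 * (B * uB) ^+ m).
  by rewrite !exprMn !exprS; ring.
have -> : ((G * (t * uH)) ^+ m.+1 * ((s * t * uB) ^+ m - (s * t * uA) ^+ m)
           + (t * uH) ^+ m * (s * t * uA) ^+ m.+1) * (A ^+ m.+1 * B ^+ m * H ^+ m.+1)
        = G ^+ m.+1 * t ^+ m.+1 * (s * t) ^+ m * (H * uH) ^+ m.+1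
          * (A ^+ m.+1 * (B * uB) ^+ m - (A * uA) ^+ m * A * B ^+ m)
          + t ^+ m.+1 * (s * t) ^+ m * (s * H) * B ^+ m * (H * uH) ^+ m
            * (A * uA) ^+ m.+1.
  by rewrite !exprMn !exprS; ring.
rewrite AuA BuB HuH !expr1n !mulr1 !mul1r key; reflexivity.
Qed.

Lemma sum_inv_pair_shift N d (e : 'I_d) g (h : {ffun 'I_e -> F}) : g != 0 ->
  \sum_(c : {ffun 'I_d -> F})
     inv_monic_poly N c ^+ m.+1 * inv_monic_poly N (c - scaled_monic d g h) ^+ m
  = inv_monic_poly N h ^+ m * power_sum F N d m.+1 %[modX N].
Proof.
move=> g_neq0; set b := scaled_monic d g h.
set Y := g^-1%:P * inv_monic_poly N h.
transitivity (\sum_(c : {ffun 'I_d -> F})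
   (Y ^+ m.+1 * (inv_monic_poly N (c - b) ^+ m - inv_monic_poly N c ^+ m)
    + inv_monic_poly N h ^+ m * inv_monic_poly N c ^+ m.+1)).
  apply: eqmodX_sum => c _.
  have Xd : 'X^d = 'X^(d - e) * 'X^e :> {poly F} by rewrite -exprD subnK // ltnW.
  rewrite /Y /inv_monic_poly Xd.
  apply: (@inv_pair_split N g _ _ (rev_monic c) (rev_monic (c - b)) (rev_monic h))
    => //; [exact: rev_monic_sub_scaled | exact: rev_monicK ..].
rewrite big_split /= -mulr_sumr sumrB (reindex_inj (addIr b)) /=.
under eq_bigr do rewrite addrK.
by rewrite subrr mulr0 add0r /power_sum mulr_sumr; reflexivity.
Qed.

Lemma power_sum_mul_same_degree N d :
  power_sum F N d m.+1 * power_sum F N d m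
  + power_sum F N d m.+1 * \sum_(e < d) power_sum F N e m
  = power_sum F N d (m.+1 + m) %[modX N].
Proof.
have diag : power_sum F N d m.+1 * power_sum F N d m
  = power_sum F N d (m.+1 + m)
    + \sum_(b : {ffun 'I_d -> F} | b != 0) \sum_(c : {ffun 'I_d -> F})
        inv_monic_poly N c ^+ m.+1 * inv_monic_poly N (c - b) ^+ m.
  rewrite exchange_big /power_sum mulr_suml -big_split /=; apply: eq_bigr => c _.
  by rewrite mulr_sumr (reindex_inj (subrI c)) /= (bigD1 (0 : {ffun 'I_d -> F})) //= subr0 exprD.
rewrite diag sum_nonzero_ffun.
transitivity (power_sum F N d (m.+1 + m)
  + \sum_(e < d) \sum_(g : F | g != 0) \sum_(h : {ffun 'I_e -> F})
      inv_monic_poly N h ^+ m * power_sum F N d m.+1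
  + power_sum F N d m.+1 * \sum_(e < d) power_sum F N e m).
  apply: eqmodX_add_Proper; last reflexivity.
  apply: eqmodX_add_Proper; first reflexivity.
  apply: eqmodX_sum => e _; apply: eqmodX_sum => g g_neq0.
  apply: eqmodX_sum => h _; exact: sum_inv_pair_shift.
have -> : \sum_(e < d) \sum_(g : F | g != 0) \sum_(h : {ffun 'I_e -> F})
            inv_monic_poly N h ^+ m * power_sum F N d m.+1
        = - (power_sum F N d m.+1 * \sum_(e < d) power_sum F N e m).
  rewrite mulr_sumr -sumrN; apply: eq_bigr => e _.
  by rewrite sumr_nonzero_const ?mulrn_card_finField // -mulr_suml mulrC.
by rewrite subrK; reflexivity.
Qed.

Lemma coef_zetaC_mul j : (0 < m)%N ->
  ps_mul (zetaC F m.+1) (zetaC F m) j = zetaC F (m.+1 + m) j + zetaC2 F m m.+1 j.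
Proof.
move=> m_gt0; have jN := ltnSn j.
rewrite (trunc_ps_coef (p := (\sum_(d < j.+1) power_sum F j.+1 d m.+1)
                            * \sum_(d < j.+1) power_sum F j.+1 d m) _ jN); last first.
  by rewrite trunc_ps_mul !trunc_zetaC //; reflexivity.
rewrite (coef_zetaC F (s := m.+1 + m) _ jN) // coef_zetaC2 -coefD.
suff split_degrees : (\sum_(d < j.+1) power_sum F j.+1 d m.+1)
                       * \sum_(d < j.+1) power_sum F j.+1 d m
  = \sum_(d < j.+1) power_sum F j.+1 d (m.+1 + m)
    + \sum_(d1 < j.+1) \sum_(d2 < d1) power_sum F j.+1 d1 m * power_sum F j.+1 d2 m.+1
  %[modX j.+1] by exact: split_degrees.
rewrite mulr_suml; under eq_bigr do rewrite mulr_sumr.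
rewrite (sum_square_split _ (fun d e => power_sum F j.+1 d m.+1 * power_sum F j.+1 e m)).
apply: eqmodX_add_Proper.
  rewrite -big_split /=; apply: eqmodX_sum => d _.
  by rewrite -mulr_sumr; apply: power_sum_mul_same_degree.
by under eq_bigr do under eq_bigr do rewrite mulrC; reflexivity.
Qed.

End FrobeniusPower.

Local Close Scope ring_scope.

Theorem mainTheorem7 (F : finFieldType) (q : nat) (hq : #|F| = q) (hq2 : 2 < q)
  (k : nat) (hk : 1 <= k) :
  ps_mul (zetaC F (q ^ k)) (zetaC F (q ^ k - 1)) =
  ps_add (zetaC F (2 * q ^ k - 1)) (zetaC2 F (q ^ k - 1) (q ^ k)).
Proof.
have n_gt1 : (1 < q ^ k)%N by rewrite -{1}(expn0 q) ltn_exp2l // ltnW.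
set m := (q ^ k).-1.
have n_eq : (q ^ k)%N = m.+1 by rewrite prednK // ltnW.
have -> : (q ^ k - 1 = m)%N by rewrite subn1.
have -> : (2 * q ^ k - 1 = m.+1 + m)%N by rewrite n_eq; lia.
rewrite n_eq; apply: functional_extensionality => j; apply: coef_zetaC_mul.
- by move=> u v; rewrite -n_eq -hq exprB_card_finField_pow.
- by move=> g; rewrite -n_eq -hq expf_card_pow.
- by rewrite /m -subn1 subn_gt0.
Qed.
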